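(* If $\mathsf{A}=(A_1,\dots,A_N)\in GL_2(\mathbb{R})^N$ is dominated and irreducible, then $\mathsf{A}$ is strongly irreducible.
   Context: For a finite word $\mathtt{i}=i_1\cdots i_n$, $A_{\mathtt{i}}=A_{i_1}\cdots A_{i_n}$ and $|\mathtt{i}|=n$; $\Sigma_*$ is the set of finite words. $\alpha_1\ge\alpha_2$ are singular values. Dominated: there are $C>0$, $0<\tau<1$ with $\alpha_2(A_{\mathtt{i}})\le C\tau^{|\mathtt{i}|}\alpha_1(A_{\mathtt{i}})$ for all $\mathtt{i}\in\Sigma_*$. Irreducible: no line $V$ through the origin has $A_iV=V$ for all $i$. Strongly irreducible: no finite nonempty set $\mathcal{V}$ of lines through the origin satisfies $A_i\mathcal{V}=\mathcal{V}$ for all $i$. *)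

From HB Require Import structures.
From mathcomp Require Import all_boot all_order all_algebra.
From mathcomp Require Import reals.
Set Implicit Arguments. Unset Strict Implicit. Unset Printing Implicit Defensive.
Import Order.TTheory GRing.Theory Num.Theory.
Local Open Scope ring_scope.

(* Matrices act on column vectors; a word i_1...i_n gives A_{i_1} *m ... *m A_{i_n}. *)
Definition word_prod (R : realType) (N : nat) (A : 'I_N -> 'M[R]_2)
  (w : seq 'I_N) : 'M[R]_2 := foldr (fun i M => A i *m M) 1%:M w.

(* Singular values of a 2x2 matrix: square roots of the two eigenvalues
   (largest first) of A^T A, whose characteristic polynomial is
   X^2 - tr(A^T A) X + det(A^T A). *)
Definition sv1 (R : realType) (A : 'M[R]_2) : R :=
  let M := A^T *m A in
  Num.sqrt ((\tr M + Num.sqrt (\tr M ^+ 2 - 4 * \det M)) / 2).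
Definition sv2 (R : realType) (A : 'M[R]_2) : R :=
  let M := A^T *m A in
  Num.sqrt ((\tr M - Num.sqrt (\tr M ^+ 2 - 4 * \det M)) / 2).

Definition dominated (R : realType) (N : nat) (A : 'I_N -> 'M[R]_2) : Prop :=
  exists C tau : R, 0 < C /\ 0 < tau < 1 /\
    forall w : seq 'I_N,
      sv2 (word_prod A w) <= C * tau ^+ size w * sv1 (word_prod A w).

(* A line through the origin of R^2 is the span of a nonzero column vector v;
   two nonzero vectors give the same line iff their spans are equal. *)
Definition same_line (R : realType) (u v : 'cV[R]_2) : bool :=
  (u^T == v^T)%MS.

Definition fixes_line (R : realType) (M : 'M[R]_2) (v : 'cV[R]_2) : bool :=
  same_line (M *m v) v.

Definition irreducible_tuple (R : realType) (N : nat) (A : 'I_N -> 'M[R]_2)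
  : Prop :=
  ~ exists v : 'cV[R]_2, v != 0 /\ forall i, fixes_line (A i) v.

(* A finite nonempty set of lines is given by a nonempty list s of nonzero
   spanning vectors; M s = s as sets of lines means: the image of every line
   of s is a line of s, and every line of s is the image of a line of s. *)
Definition invariant_lines (R : realType) (M : 'M[R]_2) (s : seq 'cV[R]_2)
  : Prop :=
  (forall u, u \in s -> exists2 v, v \in s & same_line (M *m u) v) /\
  (forall v, v \in s -> exists2 u, u \in s & same_line (M *m u) v).

Definition strongly_irreducible_tuple (R : realType) (N : nat)
  (A : 'I_N -> 'M[R]_2) : Prop :=
  ~ exists s : seq 'cV[R]_2,
      s != [::] /\ (forall v, v \in s -> v != 0) /\
      forall i, invariant_lines (A i) s.

From mathcomp Require Import all_boot all_order all_algebra.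
From mathcomp Require Import reals.
From mathcomp Require Import ring lra.
Set Implicit Arguments. Unset Strict Implicit. Unset Printing Implicit Defensive.
Import Order.TTheory GRing.Theory Num.Theory.
Local Open Scope ring_scope.

(* Suppose a nonempty finite set s of lines is invariant under every A_i, and
   let u span a line of s.  By irreducibility some M := A_j moves the line of
   u.  Since M permutes the finitely many lines of s, the line of u is
   periodic: M^n u = c u for some n > 0 (pigeonhole).  Then M^n also has the
   eigenvalue c on the line of M u, which differs from the line of u; two
   independent eigenvectors for the same eigenvalue force M^n = c I, with
   c <> 0 as M is invertible.  But a dominated tuple has no nonempty word whose
   product is a nonzero scalar matrix: the powers of that word have equal
   singular values while domination makes their ratio decay geometrically. *)

Section Lines.
Variable R : realType.
Implicit Types u v w : 'cV[R]_2.

Lemma same_line_refl v : same_line v v.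
Proof. exact/eqmxP. Qed.

Lemma same_line_sym u v : same_line u v -> same_line v u.
Proof. by move=> /eqmxP uv; apply/eqmxP/eqmx_sym. Qed.

Lemma same_line_trans u v w :
  same_line u v -> same_line v w -> same_line u w.
Proof. by move=> /eqmxP uv /eqmxP vw; apply/eqmxP/(eqmx_trans uv). Qed.

Lemma same_line_mul (M : 'M[R]_2) u v :
  same_line u v -> same_line (M *m u) (M *m v).
Proof. by move=> /eqmxP uv; apply/eqmxP; rewrite !trmx_mul; apply: eqmxMr. Qed.

Lemma same_line_unmul (M : 'M[R]_2) u v : M \in unitmx ->
  same_line (M *m u) (M *m v) -> same_line u v.
Proof. by move=> Mu /(same_line_mul (invmx M)); rewrite !mulmxA mulVmx // !mul1mx. Qed.

Lemma same_line_scale u v : same_line u v -> exists c : R, v = c *: u.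
Proof.
move=> /andP[_ /submxP[D vD]]; exists (D 0 0).
by rewrite -[v]trmxK vD (mx11_scalar D) mul_scalar_mx linearZ /= trmxK mxE mulr1n.
Qed.

Lemma distinct_lines_unitmx u w : u != 0 -> w != 0 -> ~~ same_line u w ->
  col_mx u^T w^T \in unitmx.
Proof.
move=> u0 w0 uw; rewrite -row_full_unit /row_full eqn_leq rank_leq_col /=.
have rk1 v : v != 0 -> \rank v^T = 1%N.
  by move=> v0; rewrite rank_rV trmx_eq0 v0.
rewrite -addsmxE ltnNge; apply/negP => rk_le1.
have sum_eq v : v != 0 -> (v^T <= u^T + w^T)%MS -> (v^T == u^T + w^T)%MS.
  move=> v0 sv; rewrite -(mxrank_leqif_eq sv) rk1 // eqn_leq.
  by rewrite (leq_trans rk_le1) // -{1}(rk1 v v0) mxrankS.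
have /eqmxP eu := sum_eq u u0 (addsmxSl _ _).
have /eqmxP ew := sum_eq w w0 (addsmxSr _ _).
by move/negP: uw; apply; apply/eqmxP/(eqmx_trans eu)/eqmx_sym.
Qed.

Lemma two_eigenlines_scalar (M : 'M[R]_2) u w (c : R) :
  u != 0 -> w != 0 -> ~~ same_line u w ->
  M *m u = c *: u -> M *m w = c *: w -> M = c%:M.
Proof.
move=> u0 w0 uw Mu Mw; have B_unit := distinct_lines_unitmx u0 w0 uw.
set B := col_mx u^T w^T in B_unit.
have BM : B *m M^T = B *m c%:M.
  rewrite mul_col_mx -!trmx_mul Mu Mw !linearZ /= mul_mx_scalar.
  by rewrite -scale_col_mx.
by rewrite -[M]trmxK -(mulKmx B_unit M^T) BM mulKmx // tr_scalar_mx.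
Qed.
End Lines.

Lemma periodic_line (R : realType) (M : 'M[R]_2) (s : seq 'cV[R]_2) u :
  M \in unitmx -> u \in s ->
  (forall x, x \in s -> exists2 y, y \in s & same_line (M *m x) y) ->
  exists2 n, (0 < n)%N & same_line u (M ^+ n *m u).
Proof.
move=> M_unit us s_inv.
have orbit_in_s k : has (same_line (M ^+ k *m u)) s.
  elim: k => [|k /hasP[v vs Mkuv]].
    by apply/hasP; exists u; rewrite // expr0 mul1mx same_line_refl.
  have [y ys Mvy] := s_inv v vs; apply/hasP; exists y => //.
  by rewrite exprS -mulmxE -mulmxA (same_line_trans (same_line_mul M Mkuv)).
(* g k is the position in s of the line of M^k u; by pigeonhole two of the
   first |s| + 1 iterates share a position, hence a line. *)
pose g (k : 'I_(size s).+1) : 'I_(size s) :=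
  Ordinal (etrans (esym (has_find _ _)) (orbit_in_s k)).
have /injectivePn[a [b ab gab]] : ~~ injectiveb g.
  by apply/injectiveP => /leq_card; rewrite !card_ord ltnn.
have line_ab : same_line (M ^+ a *m u) (M ^+ b *m u).
  have := nth_find 0 (orbit_in_s a); have := nth_find 0 (orbit_in_s b).
  move: (congr1 val gab) => /= ->.
  by move=> Hb Ha; apply: same_line_trans Ha (same_line_sym Hb).
have ab_lt : (a < b)%N || (b < a)%N by rewrite -neq_ltn.
clear ab gab; wlog lt_ab : a b line_ab ab_lt / (a < b)%N.
  move=> gen; case/orP: (ab_lt) => [|lt_ba]; first exact: gen.
  by apply: (gen b a) lt_ba; [exact: same_line_sym | rewrite orbC].
exists (b - a)%N; first by rewrite subn_gt0.
apply: (same_line_unmul (unitrX a M_unit)).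
by rewrite mulmxA mulmxE -exprD subnKC // ltnW.
Qed.

Section WordProducts.
Variables (R : realType) (N : nat) (A : 'I_N -> 'M[R]_2).

Lemma word_prod_cat (w1 w2 : seq 'I_N) :
  word_prod A (w1 ++ w2) = word_prod A w1 *m word_prod A w2.
Proof. by elim: w1 => [|i w1 IH] /=; rewrite ?mul1mx // IH mulmxA. Qed.

Lemma word_prod_repeat (w : seq 'I_N) k :
  word_prod A (flatten (nseq k w)) = word_prod A w ^+ k.
Proof. by elim: k => [|k IH]; rewrite ?expr0 //= word_prod_cat IH exprS. Qed.

Lemma word_prod_nseq j m : word_prod A (nseq m j) = A j ^+ m.
Proof. by elim: m => [|m IH]; rewrite ?expr0 // exprS -mulmxE -IH. Qed.
End WordProducts.

Lemma sv_scalar (R : realType) (c : R) :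
  sv2 (c%:M : 'M_2) = sv1 (c%:M : 'M_2) /\ (c != 0 -> 0 < sv1 (c%:M : 'M_2)).
Proof.
rewrite /sv1 /sv2 tr_scalar_mx -scalar_mxM mxtrace_scalar det_scalar.
have -> : ((c * c) *+ 2) ^+ 2 - 4 * (c * c) ^+ 2 = 0 by ring.
rewrite sqrtr0 addr0 subr0; split => // c0.
by rewrite sqrtr_gt0 divr_gt0 // pmulrn_lgt0 // lt0r mulf_neq0 //= -expr2 sqr_ge0.
Qed.

Lemma scalar_mxX (R : realType) (c : R) k : (c%:M : 'M[R]_2) ^+ k = (c ^+ k)%:M.
Proof. by elim: k => [|k IH]; rewrite ?expr0 // !exprS IH -mulmxE -scalar_mxM. Qed.

Lemma bernoulli (R : realType) (h : R) k : 0 <= h -> 1 + k%:R * h <= (1 + h) ^+ k.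
Proof.
move=> h0; elim: k => [|k IH]; first by rewrite expr0 mul0r addr0.
rewrite exprS (le_trans _ (ler_wpM2l _ IH)) ?addr_ge0 //.
have : 0 <= k%:R * h * h by rewrite !mulr_ge0.
by rewrite -natr1; lra.
Qed.

Lemma geometric_eventually_small (R : realType) (C tau : R) :
  0 < C -> 0 < tau < 1 -> exists k, forall m, (k <= m)%N -> C * tau ^+ m < 1.
Proof.
move=> C0 /andP[tau0 tau1]; set h := tau^-1 - 1.
have h0 : 0 < h by rewrite subr_gt0 invf_gt1.
have := archi_boundP (ltW (divr_gt0 C0 h0)); set k := Num.Def.archi_bound _.
rewrite ltr_pdivrMr // => C_lt; exists k => m km.
have tau_inv : tau = (1 + h)^-1 by rewrite /h addrC subrK invrK.
have Ck : C * tau ^+ k < 1.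
  have h1 : 0 < 1 + h by lra.
  rewrite tau_inv exprVn ltr_pdivrMr ?mul1r ?exprn_gt0 //.
  by apply: lt_le_trans (bernoulli k (ltW h0)); lra.
apply: le_lt_trans Ck; rewrite ler_pM2l // -(subnKC km) exprD.
by rewrite ler_piMr ?exprn_ge0 ?exprn_ile1 ?ltW.
Qed.

(* A dominated tuple has no nonempty word whose product is a nonzero scalar
   matrix: the k-th power of such a word has sv2 = sv1 > 0, whereas domination
   forces sv2 <= C tau^(k |w|) sv1 < sv1 for large k. *)
Lemma dominated_no_scalar_word (R : realType) (N : nat) (A : 'I_N -> 'M[R]_2)
    (w : seq 'I_N) (c : R) :
  dominated A -> (0 < size w)%N -> c != 0 -> word_prod A w != c%:M.
Proof.
move=> [C [tau [C0 [tau01 dom]]]] w_ne c0; apply/eqP => Aw.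
have [k small] := geometric_eventually_small C0 tau01.
have := dom (flatten (nseq k w)).
rewrite word_prod_repeat Aw scalar_mxX size_flatten /shape map_nseq sumn_nseq.
have [-> /(_ (expf_neq0 k c0)) sv_pos] := sv_scalar (c ^+ k).
have := small (size w * k)%N (leq_pmull k w_ne).
by rewrite mulnC; set t := C * _; set x := sv1 _ in sv_pos *; nra.
Qed.

Theorem mainTheorem10 (R : realType) (N : nat) (A : 'I_N -> 'M[R]_2) :
  (forall i, A i \in unitmx) ->
  dominated A -> irreducible_tuple A -> strongly_irreducible_tuple A.
Proof.
move=> A_unit A_dom A_irr [[|u s] [s_ne [s_nz s_inv]]]; first by [].

have u0 : u != 0 by apply: s_nz; rewrite mem_head.
have [j moved] : exists j, ~~ fixes_line (A j) u.
  case: (boolP [forall i, fixes_line (A i) u]) => [/forallP fixed | /forallPn //].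
  by elim: A_irr; exists u.
set M := A j in moved; have M_unit : M \in unitmx := A_unit j.
have [n n0 period] := periodic_line M_unit (mem_head u s) (proj1 (s_inv j)).
have [c Mnu] := same_line_scale period.
have Mu0 : M *m u != 0.
  by apply: contra u0 => /eqP Mu0; rewrite -(mulKmx M_unit u) Mu0 mulmx0.
have Mn_scalar : M ^+ n = c%:M.
  apply: (two_eigenlines_scalar u0 Mu0) => //.
    by apply: contra moved => /same_line_sym.
  by rewrite mulmxA mulmxE -exprSr exprS -mulmxE -mulmxA Mnu scalemxAr.
have c0 : c != 0.
  by apply: contraTneq (unitrX n M_unit) => c0; rewrite Mn_scalar c0 raddf0 unitr0.
have w_ne : (0 < size (nseq n j))%N by rewrite size_nseq.
by have := dominated_no_scalar_word A_dom w_ne c0; rewrite word_prod_nseq Mn_scalar eqxx.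
Qed.
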